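(* For each $\psi\in(-\pi,\pi]$ and each $\tau>0$, $$\{(a,w)\in D_c : \operatorname{Arg}(w)=\psi,\ \tau_c(a,w)>\tau\} = \bigcup_{s>1}\frac{1}{s}\Gamma_c(\psi;\tau),$$ and consequently $$\{(a,w)\in D_c : \tau_c(a,w)>\tau\} = \bigcup_{\psi\in(-\pi,\pi]}\bigcup_{s>1}\frac{1}{s}\Gamma_c(\psi;\tau).$$
   Context: $\operatorname{Arg}(w)\in(-\pi,\pi]$ is the principal argument; $\arccos:[-1,1]\to[0,\pi]$. $D_c := \{(a,w)\in\mathbb{R}\times(\mathbb{C}\setminus\{0\}):\operatorname{Re}(w)<a<|w|\}$; $\tau_c(a,w) := \frac{1}{\sqrt{|w|^2-a^2}}[|\operatorname{Arg}(w)|-\arccos(a/|w|)]$. $a(\Omega,\psi;\tau) := -\Omega\cot(\tau\Omega-\psi)$, $\rho(\Omega,\psi;\tau) := -\Omega/\sin(\tau\Omega-\psi)$. $I_c(\psi) := (0,\psi)$ if $\psi\ge0$ and $(\psi,0)$ if $\psi\le0$. $\Gamma_c(\psi;\tau) := \{(a(\Omega,\psi;\tau),\,\rho(\Omega,\psi;\tau)e^{i\psi}) : \tau\Omega\in I_c(\psi)\}$, and $\frac1s\Gamma := \{(a/s,w/s):(a,w)\in\Gamma\}$. *)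

From Stdlib Require Import Reals.
From Coquelicot Require Import Coquelicot.
Open Scope R_scope.

(* Principal argument Arg(w) in (-PI, PI] (for w <> 0), defined via
   arccos : [-1,1] -> [0,PI]:  Arg w = acos(Re w / |w|) if Im w >= 0,
   and -acos(Re w / |w|) otherwise. *)
Definition Arg (w : C) : R :=
  if Rle_dec 0 (Im w) then acos (Re w / Cmod w) else - acos (Re w / Cmod w).

Definition D_c (a : R) (w : C) : Prop :=
  w <> 0%C /\ Re w < a /\ a < Cmod w.

Definition tau_c (a : R) (w : C) : R :=
  / sqrt (Cmod w ^ 2 - a ^ 2) * (Rabs (Arg w) - acos (a / Cmod w)).

Definition a_fun (Om psi tau : R) : R := - Om * (cos (tau * Om - psi) / sin (tau * Om - psi)).
Definition rho_fun (Om psi tau : R) : R := - Om / sin (tau * Om - psi).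

Definition I_c (psi x : R) : Prop :=
  if Rle_dec 0 psi then 0 < x < psi else psi < x < 0.

Definition Gamma_c (psi tau : R) (a : R) (w : C) : Prop :=
  exists Om : R, I_c psi (tau * Om) /\
    a = a_fun Om psi tau /\
    w = Cmult (RtoC (rho_fun Om psi tau)) (cos psi, sin psi).

Definition scaled (s : R) (G : R -> C -> Prop) (a : R) (w : C) : Prop :=
  exists (b : R) (z : C), G b z /\ a = b / s /\ w = Cmult (RtoC (/ s)) z.

From Stdlib Require Import Reals Lra.
From Coquelicot Require Import Coquelicot.
Open Scope R_scope.

(* Fix an argument psi in (-PI, PI].  Points of D_c with Arg w = psi are
   parametrised by polar coordinates: w = r e^{i psi} and a = r cos th with
   r > 0 and 0 < th < |psi|; in these coordinates
       tau_c(a, w) = (|psi| - th) / (r sin th).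
   We call [level psi t] the set of such points where this quantity equals t.
   Three facts then give the theorem:
   - [slice_level]: inside the slice Arg w = psi, level psi t is exactly the
     level set {tau_c = t} of D_c;
   - [Gamma_c_level]: the curve Gamma_c(psi; tau) is the level set level psi tau
     (the parameter Omega is, up to sign, (|psi| - th) / tau = r sin th);
   - [scaled_level]: tau_c is homogeneous of degree -1, so (1/s) level psi t
     is level psi (s t).
   Hence (1/s) Gamma_c(psi; tau) = {tau_c = s tau} in the slice, and
   {tau_c > tau} is the union of these sets over s > 1.  Taking the union over
   psi in (-PI, PI] gives the second statement, since Arg w always lies there. *)

(* Pythagorean identity with powers instead of Rsqr, the form nra uses. *)
Lemma sin2_plus_cos2 (p : R) : sin p ^ 2 + cos p ^ 2 = 1.
Proof. rewrite <- (sin2_cos2 p). unfold Rsqr. ring. Qed.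

Lemma cos_Rabs (p : R) : cos (Rabs p) = cos p.
Proof. unfold Rabs; destruct Rcase_abs; [apply cos_neg | reflexivity]. Qed.

Lemma Rabs_le_PI (p : R) : -PI < p <= PI -> Rabs p <= PI.
Proof. intro. unfold Rabs; destruct Rcase_abs; lra. Qed.

Lemma acos_lt (x y : R) : -1 <= x -> x < y -> y <= 1 -> acos y < acos x.
Proof.
  intros Hx Hxy Hy.
  pose proof (acos_bound x). pose proof (acos_bound y).
  apply cos_decreasing_0; try lra.
  rewrite !cos_acos; lra.
Qed.

Definition polar (r p : R) : C := (r * cos p, r * sin p).

Lemma RtoC_mult_pair (x c d : R) : Cmult (RtoC x) (c, d) = (x * c, x * d).
Proof. unfold Cmult, RtoC; simpl; f_equal; ring. Qed.

Lemma Cmod_polar (r p : R) : 0 <= r -> Cmod (polar r p) = r.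
Proof.
  intro Hr. unfold Cmod, polar; cbn [fst snd].
  replace ((r * cos p) ^ 2 + (r * sin p) ^ 2) with (r ^ 2)
    by (pose proof (sin2_plus_cos2 p); nra).
  now apply sqrt_pow2.
Qed.

Lemma Arg_polar (r p : R) : 0 < r -> -PI < p <= PI -> Arg (polar r p) = p.
Proof.
  intros Hr Hp. unfold Arg, Re, Im. rewrite Cmod_polar by lra.
  unfold polar; cbn [fst snd].
  replace (r * cos p / r) with (cos p) by (field; lra).
  destruct (Rle_dec 0 (r * sin p)) as [Hs | Hs]; destruct (Rle_dec 0 p).
  - apply acos_cos; lra.
  - pose proof (sin_lt_0_var p ltac:(lra) ltac:(lra)). nra.
  - pose proof (sin_ge_0 p ltac:(lra) ltac:(lra)). nra.
  - rewrite <- (cos_neg p), acos_cos by lra. ring.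
Qed.

Lemma Rabs_Arg (w : C) : Rabs (Arg w) = acos (Re w / Cmod w).
Proof.
  pose proof (acos_bound (Re w / Cmod w)).
  unfold Arg; destruct Rle_dec; [|rewrite Rabs_Ropp]; apply Rabs_right; lra.
Qed.

Lemma Re_div_Cmod_bound (w : C) : w <> 0%C -> -1 <= Re w / Cmod w <= 1.
Proof.
  intro Hw. pose proof (proj1 (Cmod_gt_0 w) Hw) as Hr.
  assert (Hle : Rabs (Re w) <= Cmod w).
  { destruct w as [x y]. unfold Cmod, Re; cbn [fst snd].
    rewrite <- sqrt_Rsqr_abs. apply sqrt_le_1_alt. unfold Rsqr. nra. }
  apply Rabs_le_between in Hle.
  split; apply (Rmult_le_reg_r (Cmod w)); try lra;
    unfold Rdiv; rewrite Rmult_assoc, Rinv_l; lra.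
Qed.

Lemma polar_Cmod_Arg (w : C) :
  w <> 0%C -> -PI < Arg w <= PI /\ w = polar (Cmod w) (Arg w).
Proof.
  intro Hw.
  pose proof (proj1 (Cmod_gt_0 w) Hw) as Hr.
  pose proof (Re_div_Cmod_bound w Hw) as Hu.
  pose proof PI_RGT_0.
  destruct w as [x y]. unfold Arg, Re, Im in *; cbn [fst snd] in *.
  set (r := Cmod (x, y)) in *.
  set (u := x / r) in *.
  assert (Hx : x = r * u) by (unfold u; field; lra).
  assert (Hr2 : r ^ 2 = x ^ 2 + y ^ 2).
  { unfold r, Cmod; cbn [fst snd]. apply pow2_sqrt. nra. }
  pose proof (acos_bound u).
  pose proof (cos_acos u Hu) as Hcos.
  (* The imaginary part is recovered from sin (acos u) = sqrt (1 - u^2). *)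
  assert (Hsin : r * sin (acos u) = Rabs y).
  { assert (Hs : 0 <= sin (acos u)) by (apply sin_ge_0; lra).
    pose proof (sin2_plus_cos2 (acos u)) as Hsc. rewrite Hcos in Hsc.
    apply Rsqr_inj; [nra | apply Rabs_pos |].
    rewrite <- Rsqr_abs. unfold Rsqr. nra. }
  unfold polar. destruct (Rle_dec 0 y).
  - rewrite Rabs_right in Hsin by lra.
    rewrite Hcos. split; [lra | f_equal; lra].
  - rewrite Rabs_left in Hsin by lra.
    rewrite cos_neg, sin_neg, Hcos. split; [| f_equal; lra].
    destruct (Req_dec (acos u) PI) as [E | E]; [| lra].
    rewrite E, sin_PI in Hsin. lra.
Qed.

(* A point of D_c with Arg w = psi is (r cos th, r e^{i psi}) with r > 0 and
   0 < th < |psi|; th = acos (a / |w|). *)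
Lemma slice_polar (psi a : R) (w : C) : -PI < psi <= PI ->
  (D_c a w /\ Arg w = psi) <->
  exists r th, 0 < r /\ 0 < th < Rabs psi /\ a = r * cos th /\ w = polar r psi.
Proof.
  intro Hpsi. pose proof (Rabs_le_PI psi Hpsi). split.
  - intros [[Hw [Hre Hmod]] HArg].
    pose proof (proj1 (Cmod_gt_0 w) Hw) as Hr.
    pose proof (Re_div_Cmod_bound w Hw) as Hu.
    destruct (polar_Cmod_Arg w Hw) as [_ Hpol].
    assert (Hv1 : a / Cmod w < 1)
      by (apply (Rmult_lt_reg_r (Cmod w)); [lra|]; field_simplify; lra).
    assert (Hv2 : Re w / Cmod w < a / Cmod w)
      by (apply Rmult_lt_compat_r; [apply Rinv_0_lt_compat|]; lra).
    exists (Cmod w), (acos (a / Cmod w)). repeat split.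
    + exact Hr.
    + rewrite <- acos_1. apply acos_lt; lra.
    + rewrite <- HArg, Rabs_Arg. apply acos_lt; lra.
    + rewrite cos_acos by lra. field. lra.
    + rewrite <- HArg. exact Hpol.
  - intros [r [th [Hr [Hth [-> ->]]]]].
    assert (Hc1 : cos th < 1) by (rewrite <- cos_0; apply cos_decreasing_1; lra).
    assert (Hc2 : cos psi < cos th)
      by (rewrite <- cos_Rabs; apply cos_decreasing_1; lra).
    repeat split.
    + apply Cmod_gt_0. rewrite Cmod_polar; lra.
    + unfold Re, polar; cbn [fst]. nra.
    + rewrite Cmod_polar by lra. nra.
    + apply Arg_polar; lra.
Qed.

Lemma tau_c_polar (psi r th : R) : -PI < psi <= PI -> 0 < r -> 0 < th < Rabs psi ->
  tau_c (r * cos th) (polar r psi) = (Rabs psi - th) / (r * sin th).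
Proof.
  intros Hpsi Hr Hth. pose proof (Rabs_le_PI psi Hpsi).
  assert (Hs : 0 < sin th) by (apply sin_gt_0; lra).
  unfold tau_c. rewrite Cmod_polar, Arg_polar by lra.
  replace (r * cos th / r) with (cos th) by (field; lra).
  rewrite acos_cos by lra.
  replace (r ^ 2 - (r * cos th) ^ 2) with ((r * sin th) ^ 2)
    by (pose proof (sin2_plus_cos2 th); nra).
  rewrite sqrt_pow2 by nra. unfold Rdiv. ring.
Qed.

(* The level set {tau_c = t} of the slice Arg w = psi, in polar coordinates. *)
Definition level (psi t a : R) (w : C) : Prop :=
  exists r th, 0 < r /\ 0 < th < Rabs psi /\ a = r * cos th /\ w = polar r psi /\
    (Rabs psi - th) / (r * sin th) = t.

Lemma slice_level (psi t a : R) (w : C) : -PI < psi <= PI ->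
  (D_c a w /\ Arg w = psi /\ tau_c a w = t) <-> level psi t a w.
Proof.
  intro Hpsi. split.
  - intros [HD [HArg Ht]].
    destruct (proj1 (slice_polar psi a w Hpsi) (conj HD HArg))
      as [r [th [Hr [Hth [Ha Hw]]]]].
    rewrite Ha, Hw, tau_c_polar in Ht by auto.
    exists r, th. auto.
  - intros [r [th [Hr [Hth [Ha [Hw Ht]]]]]].
    destruct (proj2 (slice_polar psi a w Hpsi)) as [HD HArg];
      [exists r, th; auto |].
    split; [exact HD | split; [exact HArg |]].
    subst a w. rewrite tau_c_polar; auto.
Qed.

Lemma scaled_ext (s : R) (G H : R -> C -> Prop) (a : R) (w : C) :
  (forall b z, G b z <-> H b z) -> scaled s G a w <-> scaled s H a w.
Proof.
  intro GH. unfold scaled. split;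
    intros [b [z [Hbz E]]]; exists b, z; split; auto; apply GH; exact Hbz.
Qed.

Lemma scale_polar (c r p : R) : Cmult (RtoC c) (polar r p) = polar (c * r) p.
Proof. unfold polar. rewrite RtoC_mult_pair. f_equal; ring. Qed.

(* Rescaling a denominator; valid even when y = 0, since x / 0 = 0 in R. *)
Lemma div_scale (x y c : R) : c <> 0 -> x / (c * y) = / c * (x / y).
Proof. intro Hc. unfold Rdiv. rewrite Rinv_mult. ring. Qed.

(* (1/s) level psi t = level psi (s t): the modulus r becomes r / s. *)
Lemma scaled_level (s psi t a : R) (w : C) : 0 < s ->
  scaled s (level psi t) a w <-> level psi (s * t) a w.
Proof.
  intro Hs. split.
  - intros [b [z [[r [th [Hr [Hth [-> [-> Ht]]]]]] [-> ->]]]].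
    exists (/ s * r), th. split; [| split; [exact Hth | split; [| split]]].
    + apply Rmult_lt_0_compat; [apply Rinv_0_lt_compat |]; lra.
    + unfold Rdiv. ring.
    + apply scale_polar.
    + rewrite Rmult_assoc, div_scale, Rinv_inv, Ht by (apply Rinv_neq_0_compat; lra).
      reflexivity.
  - intros [r [th [Hr [Hth [-> [-> Ht]]]]]].
    exists (s * r * cos th), (polar (s * r) psi). split; [| split].
    + exists (s * r), th. split; [nra | split; [exact Hth | split; [reflexivity | split]]].
      * reflexivity.
      * rewrite Rmult_assoc, div_scale, Ht by lra. field. lra.
    + field. lra.
    + rewrite scale_polar. f_equal. field. lra.
Qed.

Lemma RtoC_mult_unit (r p : R) : Cmult (RtoC r) (cos p, sin p) = polar r p.
Proof. unfold polar. apply RtoC_mult_pair. Qed.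

(* For psi >= 0 the parameter Omega corresponds to th = psi - tau Omega. *)
Lemma Gamma_c_level_nonneg (psi tau a : R) (w : C) : 0 < tau -> 0 <= psi <= PI ->
  Gamma_c psi tau a w <-> level psi tau a w.
Proof.
  intros Htau Hpsi. unfold Gamma_c, level, I_c, a_fun, rho_fun.
  rewrite Rabs_right by lra. destruct (Rle_dec 0 psi) as [_ | Hn]; [| lra].
  split.
  - intros [Om [HI [-> ->]]].
    set (th := psi - tau * Om).
    assert (Hsin : 0 < sin th) by (apply sin_gt_0; unfold th; lra).
    assert (HOm : 0 < Om) by nra.
    replace (tau * Om - psi) with (- th) by (unfold th; ring).
    rewrite cos_neg, sin_neg, RtoC_mult_unit.
    exists (Om / sin th), th. repeat split.
    + apply Rdiv_lt_0_compat; lra.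
    + unfold th; lra.
    + unfold th; lra.
    + field. lra.
    + f_equal. field. lra.
    + replace (psi - th) with (tau * Om) by (unfold th; ring). field. lra.
  - intros [r [th [Hr [Hth [-> [-> Ht]]]]]].
    assert (Hsin : 0 < sin th) by (apply sin_gt_0; lra).
    assert (HOm : r * sin th = (psi - th) / tau)
      by (rewrite <- Ht; field; split; lra).
    exists ((psi - th) / tau).
    replace (tau * ((psi - th) / tau)) with (psi - th) by (field; lra).
    replace (psi - th - psi) with (- th) by ring.
    rewrite cos_neg, sin_neg, RtoC_mult_unit, <- HOm.
    repeat split; try lra.
    + field. lra.
    + f_equal. field. lra.
Qed.

(* For psi < 0 the parameter Omega corresponds to th = tau Omega - psi. *)
Lemma Gamma_c_level_neg (psi tau a : R) (w : C) : 0 < tau -> -PI < psi < 0 ->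
  Gamma_c psi tau a w <-> level psi tau a w.
Proof.
  intros Htau Hpsi. unfold Gamma_c, level, I_c, a_fun, rho_fun.
  rewrite Rabs_left by lra. destruct (Rle_dec 0 psi) as [Hp | _]; [lra |].
  split.
  - intros [Om [HI [-> ->]]].
    set (th := tau * Om - psi).
    assert (Hsin : 0 < sin th) by (apply sin_gt_0; unfold th; lra).
    assert (HOm : Om < 0) by nra.
    rewrite RtoC_mult_unit.
    exists (- Om / sin th), th. repeat split.
    + apply Rdiv_lt_0_compat; lra.
    + unfold th; lra.
    + unfold th; lra.
    + field. lra.
    + replace (- psi - th) with (- (tau * Om)) by (unfold th; ring). field. lra.
  - intros [r [th [Hr [Hth [-> [-> Ht]]]]]].
    assert (Hsin : 0 < sin th) by (apply sin_gt_0; lra).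
    assert (HOm : r * sin th = - (psi + th) / tau)
      by (rewrite <- Ht; field; split; lra).
    exists ((psi + th) / tau).
    replace (tau * ((psi + th) / tau)) with (psi + th) by (field; lra).
    replace (psi + th - psi) with th by ring.
    replace ((psi + th) / tau) with (- (r * sin th)) by (rewrite HOm; field; lra).
    rewrite RtoC_mult_unit.
    repeat split; try lra.
    + field. lra.
    + f_equal. field. lra.
Qed.

Lemma Gamma_c_level (psi tau a : R) (w : C) : 0 < tau -> -PI < psi <= PI ->
  Gamma_c psi tau a w <-> level psi tau a w.
Proof.
  intros Htau Hpsi. destruct (Rle_dec 0 psi).
  - apply Gamma_c_level_nonneg; lra.
  - apply Gamma_c_level_neg; lra.
Qed.

Lemma scaled_Gamma_c (psi tau s a : R) (w : C) : 0 < tau -> -PI < psi <= PI -> 0 < s ->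
  scaled s (Gamma_c psi tau) a w <-> (D_c a w /\ Arg w = psi /\ tau_c a w = s * tau).
Proof.
  intros Htau Hpsi Hs.
  rewrite (scaled_ext s _ (level psi tau)) by (intros; now apply Gamma_c_level).
  rewrite scaled_level by exact Hs.
  symmetry. now apply slice_level.
Qed.

Theorem mainTheorem19 (tau : R) (Htau : 0 < tau) :
  (forall psi : R, - PI < psi <= PI ->
     forall (a : R) (w : C),
       (D_c a w /\ Arg w = psi /\ tau_c a w > tau) <->
       (exists s : R, s > 1 /\ scaled s (Gamma_c psi tau) a w))
  /\
  (forall (a : R) (w : C),
     (D_c a w /\ tau_c a w > tau) <->
     (exists psi : R, - PI < psi <= PI /\
        exists s : R, s > 1 /\ scaled s (Gamma_c psi tau) a w)).
Proof.
  assert (Hslice : forall psi : R, - PI < psi <= PI ->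
     forall (a : R) (w : C),
       (D_c a w /\ Arg w = psi /\ tau_c a w > tau) <->
       (exists s : R, s > 1 /\ scaled s (Gamma_c psi tau) a w)).
  { intros psi Hpsi a w. split.
    -
      intros [HD [HArg Hgt]]. exists (tau_c a w / tau). split.
      + apply (Rmult_lt_reg_r tau); [lra |]. field_simplify; lra.
      + apply scaled_Gamma_c; try lra.
        * apply Rdiv_lt_0_compat; lra.
        * split; [exact HD | split; [exact HArg |]]. field. lra.
    - intros [s [Hs Hsc]].
      apply scaled_Gamma_c in Hsc as [HD [HArg Ht]]; try lra.
      split; [exact HD | split; [exact HArg |]]. rewrite Ht. nra. }
  split; [exact Hslice |].
  intros a w. split.
  - intros [HD Hgt].
    destruct (polar_Cmod_Arg w (proj1 HD)) as [Hrange _].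
    exists (Arg w). split; [exact Hrange |]. now apply Hslice.
  - intros [psi [Hpsi Hex]]. apply (Hslice psi Hpsi) in Hex. tauto.
Qed.
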